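(* Let $(\mathcal{Z},d)$ be a Polish metric space, $p\in(1,\infty)$, $q=p/(p-1)$, $\alpha>0$, $\mathbb{P}\in\mathcal{P}_p(\mathcal{Z})$. Let $\ell:\mathcal{Z}\to\mathbb{R}$ be Borel and integrable with respect to every $\mathbb{Q}\in\mathfrak{W}^\alpha_p(\mathbb{P})$, and let $G:\mathcal{Z}\to[0,\infty)$ be Borel. Assume that for every $z,z'\in\mathcal{Z}$ there is a constant-speed geodesic $\varrho:[0,1]\to\mathcal{Z}$ with $\varrho(0)=z$, $\varrho(1)=z'$ such that $$|\ell(z')-\ell(z)|\le\Big(\int_0^1G(\varrho(t))\,dt\Big)\,d(z,z')\quad\text{and}\quad G(\varrho(t))\le(1-t)G(z)+tG(z')\ \ \forall t\in[0,1].$$ Let $\mu=\sup_{\mathbb{Q}\in\mathfrak{W}^\alpha_p(\mathbb{P})}\big(\mathbb{E}_{z\sim\mathbb{Q}}[G(z)^q]\big)^{1/q}$. Then for every $\mathbb{Q}\in\mathfrak{W}^\alpha_p(\mathbb{P})$, $$R_{\mathbb{Q}}(\ell)\le R_{\mathbb{P},\alpha,p}(\ell)\le R_{\mathbb{Q}}(\ell)+2\alpha\mu.$$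
   Context: A constant-speed geodesic from $z$ to $z'$ is a map $\varrho:[0,1]\to\mathcal{Z}$ with $\varrho(0)=z$, $\varrho(1)=z'$ and $d(\varrho(s),\varrho(t))=(t-s)\,d(z,z')$ for $0\le s\le t\le1$. $\mathcal{P}_p(\mathcal{Z})$ is the set of Borel probability measures with finite $p$-th moment; $\mathcal{W}_p(\mathbb{P},\mathbb{Q})=\big(\inf_{\gamma\in\Gamma(\mathbb{P},\mathbb{Q})}\int d(z,z')^p\,d\gamma\big)^{1/p}$ over couplings $\gamma$; $\mathfrak{W}^\alpha_p(\mathbb{P})=\{\mathbb{Q}\in\mathcal{P}_p(\mathcal{Z}):\mathcal{W}_p(\mathbb{P},\mathbb{Q})\le\alpha\}$; $R_{\mathbb{Q}}(\ell)=\int\ell\,d\mathbb{Q}$ and $R_{\mathbb{P},\alpha,p}(\ell)=\sup_{\mathbb{Q}\in\mathfrak{W}^\alpha_p(\mathbb{P})}R_{\mathbb{Q}}(\ell)$. *)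

From HB Require Import structures.
From mathcomp Require Import all_boot all_order all_algebra.
From mathcomp Require Import all_classical all_reals all_analysis.
Import Order.TTheory GRing.Theory Num.Theory.
Local Open Scope classical_set_scope.
Local Open Scope ring_scope.

HB.mixin Record Measurable_isBorel (R : realType) (d : measure_display) Z
  & Metric R Z & Measurable d Z := {
  borel_measurableE : (measurable : set (set Z)) = <<s open >>
}.
#[short(type="borelMetricType")]
HB.structure Definition BorelMetric (R : realType) (d : measure_display) :=
  { Z of Metric R Z & Measurable d Z & Measurable_isBorel R d Z }.

Section defs.
Context {R : realType} {dd : measure_display} {Z : borelMetricType R dd}.
Local Notation dist := (@mdist R Z).

Definition complete_space :=
  forall F : set_system Z, ProperFilter F -> cauchy F -> cvg F.
Definition separable_space := exists D : set Z, countable D /\ dense D.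
Definition polish := complete_space /\ separable_space.

Definition cs_geodesic (z z' : Z) (rho : R -> Z) :=
  [/\ rho 0 = z, rho 1 = z' &
      forall s t, 0 <= s -> s <= t -> t <= 1 ->
        dist (rho s) (rho t) = (t - s) * dist z z'].

Definition finite_moment (p : R) (P : probability Z R) :=
  exists z0 : Z, (\int[P]_z ((dist z0 z) `^ p)%:E < +oo)%E.

Definition coupling (P Q : probability Z R) (g : probability (Z * Z)%type R) :=
  forall A : set Z, measurable A ->
    g (A `*` setT) = P A /\ g (setT `*` A) = Q A.

Definition wasserstein (p : R) (P Q : probability Z R) : \bar R :=
  ((ereal_inf [set (\int[g]_zz ((dist zz.1 zz.2) `^ p)%:E)%E
                 | g in [set g | coupling P Q g]]) `^ p^-1)%E.

Definition wball (p alpha : R) (P : probability Z R) : set (probability Z R) :=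
  [set Q | finite_moment p Q /\ (wasserstein p P Q <= alpha%:E)%E].

Definition risk (Q : probability Z R) (l : Z -> R) : \bar R :=
  (\int[Q]_z (l z)%:E)%E.

Definition worst_risk (p alpha : R) (P : probability Z R) (l : Z -> R) : \bar R :=
  ereal_sup [set risk Q l | Q in wball p alpha P].

End defs.

(* Integrating the chord over [0,1] gives the trapezoid estimate
     |l z' - l z| <= (G z + G z') / 2 * d(z,z').
   For a coupling [g] of [A] and [B], integrating this estimate and applying
   Hoelder's inequality at each end yields
     |R_B(l) - R_A(l)| <= m * (int d^p dg)^(1/p)
   whenever [G] has [L^q] norm at most [m] under [A] and [B]; taking the
   infimum over couplings turns the right-hand side into [m * W_p(A,B)].
   Since the centre [P] lies in the ball [W_p^alpha(P)], any [Q'] of the ball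
   satisfies [R_Q'(l) <= R_P(l) + m alpha <= R_Q(l) + 2 m alpha], with
   [m = mu] the supremum of the [L^q] norms of [G] over the ball.  Separability
   of [Z] is used only to make [d] measurable on the product space. *)

From HB Require Import structures.
From mathcomp Require Import all_boot all_order all_algebra.
From mathcomp Require Import all_classical all_reals all_analysis.
From mathcomp Require Import measurable_realfun.
From mathcomp Require Import lra ring.
Import Order.TTheory GRing.Theory Num.Theory.
Import numFieldNormedType.Exports.
Local Open Scope classical_set_scope.
Local Open Scope ring_scope.

Section lebesgue_unit_interval.
Context {R : realType}.
Local Notation mu := (@lebesgue_measure R).
Local Open Scope ereal_scope.

(* Monotonicity of the integral of nonnegative functions; unlike
   [ge0_le_integral] no measurability is required, since the integral of a
   nonnegative function is a supremum over simple minorants. *)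
Lemma ge0_le_integral_nonmeasurable d (T : measurableType d)
    (nu : {measure set T -> \bar R}) (D : set T) (f1 f2 : T -> \bar R) :
  (forall x, D x -> 0 <= f1 x) -> (forall x, D x -> f1 x <= f2 x) ->
  \int[nu]_(x in D) f1 x <= \int[nu]_(x in D) f2 x.
Proof.
move=> f10 f12.
have f20 x : D x -> 0 <= f2 x by move=> Dx; exact: le_trans (f10 x Dx) (f12 x Dx).
rewrite (ge0_integralE _ f10) (ge0_integralE _ f20).
apply: ereal_sup_le => _ [h hh <-]; exists h => //= x.
by apply: le_trans (hh x) _; exact: lee_restrict.
Qed.

Lemma integral01_onem (h : R -> R) : continuous h ->
  \int[mu]_(t in `[0%R, 1%R]) (h t)%:E = \int[mu]_(t in `[0%R, 1%R]) (h (1 - t)%R)%:E.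
Proof.
move=> ch; rewrite (@integration_by_substitution_onem R h 1).
- by rewrite /unstable.onem subrr.
- by rewrite ler01 lexx.
- exact: continuous_subspaceT.
Qed.

(* The mean of a nonnegative affine function over [0,1] is the average of its
   endpoint values: the integrand and its reflection add up to [a + b]. *)
Lemma integral01_affine (a b : R) : (0 <= a)%R -> (0 <= b)%R ->
  \int[mu]_(t in `[0%R, 1%R]) (((1 - t) * a + t * b)%R)%:E = (((a + b) / 2)%R)%:E.
Proof.
move=> a0 b0; pose h t := ((1 - t) * a + t * b)%R.
have ch : continuous h.
  move=> x; apply: cvgD.
    by apply: cvgM; [apply: cvgB; [exact: cvg_cst|exact: cvg_id]|exact: cvg_cst].
  by apply: cvgM; [exact: cvg_id|exact: cvg_cst].
have h0 t : t \in `[0%R, 1%R] -> 0 <= (h t)%:E.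
  rewrite in_itv /= => /andP[t0 t1].
  by rewrite lee_fin addr_ge0 // mulr_ge0 // subr_ge0.
have honem0 t : t \in `[0%R, 1%R] -> 0 <= (h (1 - t)%R)%:E.
  rewrite in_itv /= => /andP[t0 t1]; apply: h0.
  by rewrite in_itv /= subr_ge0 t1 lerBlDl lerDr.
have mh : measurable_fun setT h by exact: continuous_measurable_fun.
have hsum : \int[mu]_(t in `[0%R, 1%R]) (h t)%:E
    + \int[mu]_(t in `[0%R, 1%R]) (h (1 - t)%R)%:E = ((a + b)%R)%:E.
  rewrite -ge0_integralD //; last 2 first.
  - by apply/measurable_EFinP; exact: measurable_funTS.
  - apply/measurable_EFinP; apply: measurable_funTS.
    by apply: measurableT_comp => //; apply: measurable_funB.
  rewrite (eq_integral (fun=> ((a + b)%R)%:E)); last first.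
    by move=> t _; rewrite -EFinD /h; congr EFin; ring.
  by rewrite integral_cst //= lebesgue_measure_itv /= lte01 -EFinB subr0 mule1.
rewrite -integral01_onem // in hsum.
have fin : \int[mu]_(t in `[0%R, 1%R]) (h t)%:E \is a fin_num.
  rewrite ge0_fin_numE; last exact: integral_ge0.
  apply: (@le_lt_trans _ _ ((a + b)%R)%:E); last exact: ltey.
  by rewrite -hsum leeDl // integral_ge0.
rewrite -(fineK fin) -EFinD in hsum *; congr EFin.
by move: hsum => /(congr1 fine) /= <-; field.
Qed.

End lebesgue_unit_interval.

Section trapezoid.
Context {R : realType} {Z : metricType R}.

Lemma trapezoid_bound (l G : Z -> R) (z z' : Z) (rho : R -> Z) :
  (forall z, 0 <= G z) ->
  ((`|l z' - l z|)%:E <=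
     (\int[lebesgue_measure]_(t in `[0%R, 1%R]) (G (rho t))%:E) * (mdist z z')%:E)%E ->
  (forall t, 0 <= t -> t <= 1 -> G (rho t) <= (1 - t) * G z + t * G z') ->
  `|l z' - l z| <= (G z + G z') / 2 * mdist z z'.
Proof.
move=> G0 hvar hchord; rewrite -lee_fin; apply: (le_trans hvar).
rewrite EFinM; apply: lee_wpmul2r; first by rewrite lee_fin mdist_ge0.
rewrite -integral01_affine //; apply: ge0_le_integral_nonmeasurable.
  by move=> t _; rewrite lee_fin.
by move=> t; rewrite /= in_itv /= => /andP[t0 t1]; rewrite lee_fin hchord.
Qed.

End trapezoid.

Section borel_distance.
Context {R : realType} {dd : measure_display} {Z : borelMetricType R dd}.
Local Notation dist := (@mdist R Z).

Lemma open_mball (x : Z) (r : R) : open [set y | dist x y < r].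
Proof.
rewrite openE => y /= hy; apply/nbhs_ballP.
exists (r - dist x y); first by rewrite /= subr_gt0.
move=> z; rewrite ballEmdist /= => hz.
by rewrite (le_lt_trans (metric_triangle x y z)) // -ltrBrDl.
Qed.

Lemma measurable_mball (x : Z) (r : R) : measurable [set y | dist x y < r].
Proof. by rewrite borel_measurableE; apply: sub_sigma_algebra; exact: open_mball. Qed.

Lemma dense_sequence (z0 : Z) : separable_space (Z := Z) ->
  exists e : nat -> Z, forall x eps, 0 < eps -> exists n, dist x (e n) < eps.
Proof.
move=> [D [cD dD]]; have [f finj] := countable_injP _ cD.
pose e n := if pselect (exists x, D x /\ f x = n) is left h
  then proj1_sig (cid h) else z0.
exists e => x eps eps0.
have [a [xa Da]] : [set y | dist x y < eps] `&` D !=set0.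
  by apply: dD; [exists x => /=; rewrite mdistxx|exact: open_mball].
exists (f a); rewrite /e; case: pselect => [h|]; last by case; exists a.
case: (cid h) => b [Db fb] /=.
by have -> : b = a by apply: finj; rewrite ?inE.
Qed.

(* On a separable space the distance is measurable for the product
   sigma-algebra: [d(x,y) < r] is the countable union over centres [e n] of a
   dense sequence and rationals [s] of the rectangles
   [B(e n, s) x B(e n, r - s)]. *)
Lemma measurable_mdist (z0 : Z) : separable_space (Z := Z) ->
  measurable_fun [set: Z * Z] (fun zz => dist zz.1 zz.2).
Proof.
move=> /(dense_sequence z0) [e he].
apply: (measurability _ (RGenInftyO.measurableE R)) => //.
move=> /= _ [_ [r ->] <-]; rewrite setTI.
have -> : (fun zz : Z * Z => dist zz.1 zz.2) @^-1` `]-oo, r[ =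
    \bigcup_(i : nat * rat) ([set y | dist (e i.1) y < ratr i.2] `*`
                             [set y | dist (e i.1) y < r - ratr i.2]).
  apply/seteqP; split => [[x y]|[x y]]; rewrite /preimage /= in_itv /=.
    move=> hxy; pose del := (r - dist x y) / 3.
    have del0 : 0 < del by rewrite divr_gt0 // subr_gt0.
    have [n hn] := he x del del0; rewrite metric_sym in hn.
    have [s /itvP hs] := @rat_in_itvoo R del (2 * del)
      ltac:(by rewrite ltr_pMl // ltr1n).
    exists (n, s) => //=; split => /=; first by rewrite (lt_trans hn) ?hs.
    have := metric_triangle (e n) x y.
    have : r - dist x y = 3 * del by rewrite /del mulrC divfK // pnatr_eq0.
    have : ratr s < 2 * del by rewrite hs.
    lra.
  move=> [[n s] _ /= [h1 h2]].
  apply: (le_lt_trans (metric_triangle x (e n) y)).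
  by rewrite metric_sym -(subrK (ratr s) r) addrC ltrD // addrC.
apply: countable_bigcupT_measurable => // i.
by apply: measurableX; exact: measurable_mball.
Qed.

End borel_distance.

Section image_measure.
Local Open Scope ereal_scope.
Context {d1 d2 : measure_display} {X : measurableType d1} {Y : measurableType d2}
  {R : realType}.
Variables (mu : {measure set X -> \bar R}) (nu : {measure set Y -> \bar R}).
Variables (phi : X -> Y) (mphi : measurable_fun setT phi).

Hypothesis image_nu : forall S, measurable S -> mu (phi @^-1` S) = nu S.

Lemma ge0_integral_image (f : Y -> \bar R) :
  measurable_fun setT f -> (forall y, 0 <= f y) ->
  \int[mu]_x f (phi x) = \int[nu]_y f y.
Proof.
move=> mf f0; have := ge0_integral_pushforward mphi mu measurableT mf (fun y _ => f0 y).
rewrite preimage_setT => <-.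
by apply: eq_measure_integral => S mS _; exact: image_nu.
Qed.

Lemma integral_image (f : Y -> R) : measurable_fun setT f ->
  nu.-integrable setT (EFin \o f) ->
  mu.-integrable setT (fun x => (f (phi x))%:E) /\
  \int[mu]_x (f (phi x))%:E = \int[nu]_y (f y)%:E.
Proof.
move=> mf /integrableP[_ fint].
have mfE : measurable_fun setT (EFin \o f) by exact/measurable_EFinP.
have intf : mu.-integrable setT (fun x => (f (phi x))%:E).
  apply/integrableP; split.
    by apply/measurable_EFinP; exact: measurableT_comp.
  by rewrite (ge0_integral_image (fun y => `|(f y)%:E|)) //; exact: measurableT_comp.
split => //; have := @integral_pushforward _ _ _ _ R phi mphi mu setT _ mfE
  ltac:(by rewrite preimage_setT) measurableT.
rewrite preimage_setT => <-.
by apply: eq_measure_integral => S mS _; exact: image_nu.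
Qed.

End image_measure.

Section couplings.
Context {R : realType} {dd : measure_display} {Z : borelMetricType R dd}.
Local Notation dist := (@mdist R Z).
Local Open Scope ereal_scope.
Variables (A B : probability Z R) (g : probability (Z * Z)%type R).
Hypothesis gAB : coupling A B g.

Lemma coupling_fst S : measurable S -> g (fst @^-1` S) = A S.
Proof.
move=> mS; rewrite -(gAB S mS).1; congr (g _).
by apply/seteqP; split => [[x y]|[x y]] //= [].
Qed.

Lemma coupling_snd S : measurable S -> g (snd @^-1` S) = B S.
Proof.
move=> mS; rewrite -(gAB S mS).2; congr (g _).
by apply/seteqP; split => [[x y]|[x y]] //= [].
Qed.

Variables (p q : R) (G : Z -> R).
Hypotheses (md : measurable_fun setT (fun zz : Z * Z => dist zz.1 zz.2))
  (p0 : (0 < p)%R) (q0 : (0 < q)%R) (pq : (p^-1 + q^-1 = 1)%R)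
  (mG : measurable_fun setT G) (G0 : forall z, (0 <= G z)%R).

Let cost := \int[g]_zz ((dist zz.1 zz.2) `^ p)%:E.

(* Hoelder's inequality for [G] evaluated at one end of the coupling: the
   [L^q(g)] norm of [G \o phi] is the [L^q(C)] norm of [G] when [C] is the
   corresponding marginal. *)
Lemma hoelder_marginal (C : probability Z R) (phi : Z * Z -> Z) (m : R) :
  measurable_fun setT phi ->
  (forall S, measurable S -> g (phi @^-1` S) = C S) ->
  (\int[C]_z ((G z) `^ q)%:E) `^ q^-1 <= m%:E ->
  \int[g]_zz (G (phi zz) * dist zz.1 zz.2)%:E <= m%:E * cost `^ p^-1.
Proof.
move=> mphi gC hm.
have mGphi : measurable_fun setT (G \o phi) by exact: measurableT_comp.
have := @hoelder _ _ R g (G \o phi) (fun zz => dist zz.1 zz.2) q p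
  mGphi md q0 p0 ltac:(by rewrite addrC).
rewrite Lnorm1 Lnorm.unlock.
under eq_integral do rewrite /= ger0_norm ?mulr_ge0 ?mdist_ge0 //.
under [X in _ <= X `^ _ * _]eq_integral do rewrite /= ger0_norm //.
under [X in _ <= _ * X `^ _]eq_integral do rewrite /= ger0_norm ?mdist_ge0 //.
move=> /le_trans; apply; apply: lee_wpmul2r; first exact: poweR_ge0.
rewrite (ge0_integral_image _ _ _ mphi gC (fun z => ((G z) `^ q)%:E)) //.
- by apply/measurable_EFinP; exact: (measurableT_comp (measurable_powR _) mG).
- by move=> z; rewrite lee_fin powR_ge0.
Qed.

Variables (l : Z -> R) (m : R).
Hypotheses (ml : measurable_fun setT l)
  (lA : A.-integrable setT (fun z => (l z)%:E))
  (lB : B.-integrable setT (fun z => (l z)%:E))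
  (l_lip : forall z z', (`|l z' - l z| <= (G z + G z') / 2 * dist z z')%R)
  (GA : (\int[A]_z ((G z) `^ q)%:E) `^ q^-1 <= m%:E)
  (GB : (\int[B]_z ((G z) `^ q)%:E) `^ q^-1 <= m%:E).

Lemma risk_diff_coupling :
  risk B l - risk A l = \int[g]_zz ((l zz.2 - l zz.1)%R)%:E.
Proof.
have [iA eA] := integral_image _ _ _ measurable_fst coupling_fst l ml lA.
have [iB eB] := integral_image _ _ _ measurable_snd coupling_snd l ml lB.
by rewrite /risk -eA -eB -integralB_EFin.
Qed.

Lemma risk_gap_coupling : `|risk B l - risk A l| <= m%:E * cost `^ p^-1.
Proof.
have mGd (phi : Z * Z -> Z) : measurable_fun setT phi ->
    measurable_fun setT (fun zz => (G (phi zz) * dist zz.1 zz.2)%R%:E).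
  by move=> mphi; apply/measurable_EFinP; apply: measurable_funM => //;
    exact: measurableT_comp.
have Gd0 (phi : Z * Z -> Z) zz : 0 <= (G (phi zz) * dist zz.1 zz.2)%R%:E.
  by rewrite lee_fin mulr_ge0 // mdist_ge0.
have lip_int : \int[g]_zz `|((l zz.2 - l zz.1)%R)%:E| <=
    (\int[g]_zz (G zz.1 * dist zz.1 zz.2)%:E +
     \int[g]_zz (G zz.2 * dist zz.1 zz.2)%:E) * (2^-1)%:E.
  rewrite -ge0_integralD; last 5 first.
  - exact: measurableT.
  - by move=> zz _; exact: (Gd0 fst).
  - exact: (mGd _ measurable_fst).
  - by move=> zz _; exact: (Gd0 snd).
  - exact: (mGd _ measurable_snd).
  rewrite -ge0_integralZr //; last 2 first.
  - by apply: emeasurable_funD; [exact: (mGd _ measurable_fst)|exact: (mGd _ measurable_snd)].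
  - by move=> zz _; rewrite adde_ge0.
  apply: ge0_le_integral_nonmeasurable => zz _; first exact: abse_ge0.
  rewrite abse_EFin -!EFinD -EFinM lee_fin (le_trans (l_lip _ _)) //.
  by rewrite le_eqVlt; apply/orP; left; apply/eqP; ring.
have G_fst := hoelder_marginal _ _ _ measurable_fst coupling_fst GA.
have G_snd := hoelder_marginal _ _ _ measurable_snd coupling_snd GB.
rewrite risk_diff_coupling; apply: le_trans (le_abse_integral _ _ _) _ => //.
  by apply/measurable_EFinP; apply: measurable_funB; exact: measurableT_comp.
apply: (le_trans lip_int); apply: le_trans (lee_wpmul2r _ (leeD G_fst G_snd)) _.
  by rewrite lee_fin invr_ge0.
have : 0 <= m%:E * cost `^ p^-1.
  by apply: mule_ge0; [exact: le_trans (poweR_ge0 _ _) GA|exact: poweR_ge0].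
case: (m%:E * cost `^ p^-1) => [x| |//] x0; last by rewrite leey.
by rewrite -EFinD -EFinM lee_fin; lra.
Qed.

End couplings.

Section wasserstein_ball.
Context {R : realType} {dd : measure_display} {Z : borelMetricType R dd}.
Local Notation dist := (@mdist R Z).
Local Open Scope ereal_scope.

Local Notation cost p g := (\int[g]_zz ((dist zz.1 zz.2) `^ p)%:E).

Lemma cost_ge0 (p : R) (g : probability (Z * Z)%type R) : 0 <= cost p g.
Proof. by apply: integral_ge0 => zz _; rewrite lee_fin powR_ge0. Qed.

Lemma le_mul_wasserstein (A B : probability Z R) (p m alpha x : R) :
  (0 < p)%R -> (0 <= m)%R -> (0 <= x)%R ->
  (forall g, coupling A B g -> x%:E <= m%:E * cost p g `^ p^-1) ->
  wasserstein p A B <= alpha%:E -> x%:E <= (m * alpha)%:E.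
Proof.
move=> p0 m0 x0 hg hW.
have [g0 hg0] : exists g, coupling A B g.
  apply/not_existsP => hn; move: hW; rewrite /wasserstein.
  set S := (X in ereal_inf X).
  have -> : S = set0 by apply/seteqP; split => // _ [g /= gAB _]; exact: hn gAB.
  by rewrite ereal_inf0 poweRyr // invr_neq0 // gt_eqF.
have [m_eq0|m_neq0] := eqVneq m 0%R.
  by move: (hg g0 hg0); rewrite m_eq0 mul0e mul0r.
have mp : (0 < m)%R by rewrite lt0r m_neq0.
have xm_cost g : coupling A B g -> (((x / m) `^ p)%R)%:E <= cost p g.
  move=> /hg; have := cost_ge0 p g.
  case: (cost p g) => [y| |//] y0; last by rewrite leey.
  rewrite poweR_EFin -EFinM !lee_fin => hxy; rewrite lee_fin in y0.
  have xm_le : (x / m <= y `^ p^-1)%R by rewrite ler_pdivrMr // mulrC.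
  have : ((x / m) `^ p <= (y `^ p^-1) `^ p)%R.
    apply: ge0_ler_powR => //; first exact: ltW.
    - by rewrite nnegrE divr_ge0 // ltW.
    - by rewrite nnegrE powR_ge0.
  by rewrite -powRrM mulVf ?gt_eqF // powRr1.
have W_ge : (((x / m) `^ p)%R)%:E `^ p^-1 <= wasserstein p A B.
  apply: gt0_ler_poweR; first by rewrite invr_ge0 ltW.
  - by rewrite in_itv /= leey andbT lee_fin powR_ge0.
  - rewrite in_itv /= leey andbT; apply: le_ereal_inf_tmp => _ [g _ <-].
    exact: cost_ge0.
  - by apply: le_ereal_inf_tmp => _ [g hc <-]; exact: xm_cost.
rewrite poweR_EFin -powRrM mulfV ?gt_eqF // powRr1 in W_ge; last first.
  by rewrite divr_ge0 // ltW.
have := le_trans W_ge hW; rewrite !lee_fin ler_pdivrMr // => h.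
by rewrite mulrC.
Qed.

Lemma measurable_diag : measurable_fun [set: Z] (fun z : Z => (z, z)).
Proof. exact: measurable_fun_pair. Qed.

Definition diag_mfun : {mfun Z >-> (Z * Z)%type} :=
  HB.pack (fun z : Z => (z, z)) (isMeasurableFun.Build _ _ _ _ _ measurable_diag).

(* The centre of a Wasserstein ball belongs to it: the diagonal coupling of
   [P] with itself has zero cost. *)
Lemma center_in_wball (p alpha : R) (P : probability Z R) :
  measurable_fun setT (fun zz : Z * Z => dist zz.1 zz.2) ->
  (0 < p)%R -> (0 <= alpha)%R -> finite_moment p P -> wball p alpha P P.
Proof.
move=> md p0 a0 hP; split => //.
pose g := distribution P diag_mfun.
have gPP : coupling P P g.
  move=> S mS; rewrite /g /distribution /pushforward; split; congr (P _);
  by apply/seteqP; split => [z|z] /=; [case|].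
have g_cost0 : cost p g = 0.
  rewrite (@ge0_integral_distribution _ _ _ _ R P diag_mfun
    (fun zz => ((dist zz.1 zz.2) `^ p)%:E)).
  - by apply: integral0_eq => z _ /=; rewrite mdistxx powR0 // gt_eqF.
  - apply/measurable_EFinP.
    exact: (@measurableT_comp _ _ _ _ _ _ (@powR R ^~ p)).
  - by move=> zz; rewrite lee_fin powR_ge0.
rewrite /wasserstein.
have -> : ereal_inf [set cost p g0 | g0 in [set g0 | coupling P P g0]] = 0.
  apply/eqP; rewrite eq_le; apply/andP; split.
    by rewrite -g_cost0; apply: ereal_inf_lbound; exists g.
  by apply: le_ereal_inf_tmp => _ [g1 _ <-]; exact: cost_ge0.
by rewrite poweR0r ?invr_neq0 ?gt_eqF // lee_fin.
Qed.

End wasserstein_ball.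

Section risk_gap.
Context {R : realType} {dd : measure_display} {Z : borelMetricType R dd}.
Local Notation dist := (@mdist R Z).
Local Open Scope ereal_scope.
Variables (p q m : R) (l G : Z -> R).
Hypotheses (md : measurable_fun setT (fun zz : Z * Z => dist zz.1 zz.2))
  (p0 : (0 < p)%R) (q0 : (0 < q)%R) (pq : (p^-1 + q^-1 = 1)%R) (m0 : (0 <= m)%R)
  (ml : measurable_fun setT l) (mG : measurable_fun setT G)
  (G0 : forall z, (0 <= G z)%R)
  (l_lip : forall z z', (`|l z' - l z| <= (G z + G z') / 2 * dist z z')%R).

Let Gnorm_le (C : probability Z R) := (\int[C]_z ((G z) `^ q)%:E) `^ q^-1 <= m%:E.

Lemma risk_gap_wasserstein (A B : probability Z R) (alpha : R) :
  A.-integrable setT (fun z => (l z)%:E) -> B.-integrable setT (fun z => (l z)%:E) ->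
  Gnorm_le A -> Gnorm_le B -> wasserstein p A B <= alpha%:E ->
  (`|fine (risk B l) - fine (risk A l)| <= m * alpha)%R.
Proof.
move=> lA lB GA GB hW.
have fA : risk A l \is a fin_num by exact: integrable_fin_num.
have fB : risk B l \is a fin_num by exact: integrable_fin_num.
rewrite -lee_fin.
apply: (le_mul_wasserstein _ _ _ _ _ _ p0 m0 (normr_ge0 _) _ hW) => g gAB.
have := @risk_gap_coupling _ _ _ A B g gAB p q G md p0 q0 pq mG G0 l m
  ml lA lB l_lip GA GB.
by rewrite -(fineK fA) -(fineK fB) -EFinB abse_EFin.
Qed.

(* Worst-case risk over the ball [W_p^alpha(P)]: comparing every [Q'] in the
   ball with the centre [P] and then [P] with [Q] costs [m * alpha] twice. *)
Lemma worst_risk_le (alpha : R) (P Q : probability Z R) :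
  (0 <= alpha)%R -> finite_moment p P ->
  (forall Q', wball p alpha P Q' -> Q'.-integrable setT (fun z => (l z)%:E)) ->
  (forall Q', wball p alpha P Q' -> Gnorm_le Q') ->
  wball p alpha P Q -> worst_risk p alpha P l <= risk Q l + (2 * alpha * m)%:E.
Proof.
move=> a0 hP lint Gle hQ.
have PP := center_in_wball _ _ _ md p0 a0 hP.
have gap Q' : wball p alpha P Q' ->
    (`|fine (risk Q' l) - fine (risk P l)| <= m * alpha)%R.
  by move=> hQ'; exact: risk_gap_wasserstein (lint _ PP) (lint _ hQ')
    (Gle _ PP) (Gle _ hQ') hQ'.2.
apply: ge_ereal_sup => _ [Q' hQ' <-].
have fQ : risk Q l \is a fin_num by exact/integrable_fin_num/lint.
have fQ' : risk Q' l \is a fin_num by exact/integrable_fin_num/lint.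
rewrite -(fineK fQ) -(fineK fQ') -EFinD lee_fin.
by move: (gap _ hQ) (gap _ hQ'); rewrite !ler_norml; lra.
Qed.

End risk_gap.

Theorem mainTheorem5 (R : realType) (dd : measure_display)
  (Z : borelMetricType R dd) (p q alpha : R) (P : probability Z R)
  (l G : Z -> R) :
  polish (Z := Z) ->
  1 < p -> q = p / (p - 1) -> 0 < alpha ->
  finite_moment p P ->
  measurable_fun setT l ->
  (forall Q, wball p alpha P Q -> Q.-integrable setT (fun z => (l z)%:E)) ->
  measurable_fun setT G -> (forall z, 0 <= G z) ->
  (forall z z' : Z, exists rho : R -> Z,
     [/\ cs_geodesic z z' rho,
         ((`|l z' - l z|)%:E <=
            (\int[lebesgue_measure]_(t in `[0%R, 1%R]) (G (rho t))%:E)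
            * (mdist z z')%:E)%E
       & forall t, 0 <= t -> t <= 1 ->
           G (rho t) <= (1 - t) * G z + t * G z']) ->
  let mu := ereal_sup [set ((\int[Q]_z ((G z) `^ q)%:E) `^ q^-1)%E
                       | Q in wball p alpha P] in
  forall Q, wball p alpha P Q ->
    (risk Q l <= worst_risk p alpha P l)%E /\
    (worst_risk p alpha P l <= risk Q l + (2 * alpha)%:E * mu)%E.
Proof.
move=> [_ sep] p1 hq a0 hP ml lint mG G0 hgeo mu Q hQ.
split; first by apply: ereal_sup_ubound; exists Q.
have p0 : 0 < p by lra.
have q0 : 0 < q by rewrite hq divr_gt0 // subr_gt0.
have pq : p^-1 + q^-1 = 1 by rewrite hq invf_div; field; rewrite gt_eqF.
have [z0 _] := hP.
have l_lip z z' : `|l z' - l z| <= (G z + G z') / 2 * mdist z z'.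
  by have [rho [_ hvar hchord]] := hgeo z z'; exact: trapezoid_bound hvar hchord.
have mu0 : (0 <= mu)%E.
  apply: le_trans (poweR_ge0 _ _) (ereal_sup_ubound _).
  by exists P => //; exact: center_in_wball (measurable_mdist z0 sep) p0 (ltW a0) hP.
have [mu_oo|mu_noo] := eqVneq mu +oo%E.
  have fQ : risk Q l \is a fin_num by exact/integrable_fin_num/lint.
  by rewrite mu_oo gt0_muley ?lte_fin ?mulr_gt0 // -(fineK fQ) addey // leey.
have fmu : mu \is a fin_num by rewrite ge0_fin_numE // ltey.
rewrite -(fineK fmu) -EFinM.
apply: (worst_risk_le _ _ _ _ _ (measurable_mdist z0 sep) p0 q0 pq
  (fine_ge0 mu0) ml mG G0 l_lip _ _ _ (ltW a0) hP lint _ hQ).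
by move=> Q' hQ'; rewrite fineK //; apply: ereal_sup_ubound; exists Q'.
Qed.
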